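(* Let $A=(a_0,\dots,a_{n-1})$ be an array of pairwise distinct numbers, $k_1<k_2$ positive integers, $\Delta=k_2-k_1$. Consider one iteration of Cover-approx$(A,k_1,k_2)$, in which the prefix $(a,c)$ (from the current start $a$ to the found end $c$) and then the suffix $(b,c)$ are found. Let $X=(x_1,\dots,x_{k_2})$ be the lexicographically minimal (with respect to the sequence of positions) increasing subsequence of length $k_2$ of $(a_a,\dots,a_c)$, and $Y=(y_1,\dots,y_{k_1})$ the lexicographically minimal increasing subsequence of length $k_1$ of $(a_b,\dots,a_c)$, where $x_t,y_t$ denote positions. Then $y_i\ge x_{i+\Delta}$ for all $1\le i\le k_1$.
   Context: For $i\le j$, $\mathrm{LIS}(i,j)$ denotes the length of a longest increasing subsequence of $(a_i,\dots,a_j)$. Cover-approx$(A,k_1,k_2)$: set $C=\emptyset$, $i=0$. Repeat: let $j$ be the smallest index $\ge i$ with $\mathrm{LIS}(i,j)\ge k_2$; if none exists, return $C$. Let $q$ be the largest index $\le j$ with $\mathrm{LIS}(q,j)\ge k_1$. Add the segment $(q,j,L)$ to $C$, where $L$ is a longest increasing subsequence of $(a_q,\dots,a_j)$, and set $i=q$. In an iteration, $(i,j)$ is called the computed prefix and $(q,j)$ the computed suffix. *)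

From mathcomp Require Import all_boot all_order all_algebra.
Set Implicit Arguments. Unset Strict Implicit. Unset Printing Implicit Defensive.
Import Order.TTheory GRing.Theory Num.Theory.

Section CoverApprox.
Variable R : realDomainType.
Local Open Scope ring_scope.

(* The array A = (a_0, ..., a_{n-1}) is a sequence; a_t = nth 0 A t. *)

Definition inc_sub (A : seq R) (i j : nat) (p : seq nat) : Prop :=
  [/\ (j < size A)%N, sorted ltn p, all (fun t => (i <= t <= j)%N) p
    & sorted (fun u v => nth 0 A u < nth 0 A v) p].

Definition LIS_ge (A : seq R) (i j k : nat) : Prop :=
  exists p, inc_sub A i j p /\ size p = k.

Definition prefix_end (A : seq R) (k2 i c : nat) : Prop :=
  [/\ (i <= c)%N, LIS_ge A i c k2
    & forall j, (i <= j < c)%N -> ~ LIS_ge A i j k2].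

Definition suffix_start (A : seq R) (k1 c q : nat) : Prop :=
  [/\ (q <= c)%N, LIS_ge A q c k1
    & forall q', (q < q' <= c)%N -> ~ LIS_ge A q' c k1].

(* the values taken by the loop variable i during Cover-approx(A, k1, k2) *)
Inductive cover_start (A : seq R) (k1 k2 : nat) : nat -> Prop :=
| cover_start0 : cover_start A k1 k2 0
| cover_startS i c q : cover_start A k1 k2 i -> prefix_end A k2 i c ->
    suffix_start A k1 c q -> cover_start A k1 k2 q.

Definition lex_le (p p' : seq nat) : Prop :=
  p = p' \/ exists t, [/\ (t < size p)%N, (t < size p')%N,
                          take t p = take t p' & (nth 0 p t < nth 0 p' t)%N].

Definition lexmin_inc_sub (A : seq R) (i j k : nat) (p : seq nat) : Prop :=
  [/\ inc_sub A i j p, size p = k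
    & forall p', inc_sub A i j p' -> size p' = k -> lex_le p p'].

End CoverApprox.

From mathcomp Require Import all_boot all_order all_algebra.
From mathcomp Require Import zify.
Import Order.TTheory GRing.Theory Num.Theory.
Set Implicit Arguments. Unset Strict Implicit.

(* Positions are 0-indexed: X = (x_0,...,x_{k2-1}), Y = (y_0,...,y_{k1-1}), and
   with D = k2 - k1 we prove x_{t+D} <= y_t for t < k1, by induction on t.
   Three general facts about increasing subsequences carry the argument:
   - [suffix_start_bound]: since b is the LARGEST start with LIS(b,c) >= k1, any
     increasing subsequence p of (a_i..a_c) with |p| >= k1 satisfies p_{|p|-k1} <= b
     (its last k1 entries would otherwise witness a larger start);
   - [lex_le_nth]: a lexicographically smaller sequence agreeing with another on
     its first s entries is <= it at entry s;
   - [inc_sub_splice]: a prefix of one increasing subsequence followed by a suffix of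
     another is again one, when the junction increases in position and value.
   Base case: x_D is the start of the last k1 entries of X, so x_D <= b <= y_0.
   Step: given x_{s-1} <= y_t (s = t+1+D), assume y_{t+1} < x_s.  The values differ.
   If a_{y_{t+1}} < a_{x_s}, then y_0..y_{t+1} x_s..x_{k2-1} has length k1+1 in
   (a_b..a_c), so y_1 <= b <= y_0, absurd.  Otherwise x_0..x_{s-1} y_{t+1}..y_{k1-1}
   has length k2 in (a_a..a_c) and beats X lexicographically at entry s. *)

Section IncreasingSubsequences.
Variable R : realDomainType.
Variable A : seq R.
Implicit Types (p q : seq nat) (i j m n : nat).

Lemma inc_sub_nth_bounds i j p n : inc_sub A i j p -> n < size p ->
  i <= nth 0 p n <= j.
Proof. by case=> _ _ inP _ ltn; apply: (allP inP); apply: mem_nth. Qed.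

Lemma inc_sub_pos_lt i j p m n : inc_sub A i j p -> m < n -> n < size p ->
  nth 0 p m < nth 0 p n.
Proof.
case=> _ srt _ _ mn np; apply: (sorted_ltn_nth ltn_trans 0 srt) => //=.
exact: ltn_trans np.
Qed.

Lemma inc_sub_val_lt i j p m n : inc_sub A i j p -> m < n -> n < size p ->
  (nth 0 A (nth 0 p m) < nth 0 A (nth 0 p n))%R.
Proof.
case=> _ _ _ srt mn np.
apply: (sorted_ltn_nth (leT := fun u v => (nth 0 A u < nth 0 A v)%R) _ 0 srt) => //=.
  by move=> u v w; apply: lt_trans.
exact: ltn_trans np.
Qed.

Lemma inc_sub_take i j p n : inc_sub A i j p -> inc_sub A i j (take n p).
Proof.
case=> jA srt inP val; split=> //; [exact: take_sorted | | exact: take_sorted].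
by apply/allP=> x /mem_take /(allP inP).
Qed.

Lemma inc_sub_drop i j p n : inc_sub A i j p -> n < size p ->
  inc_sub A (nth 0 p n) j (drop n p).
Proof.
move=> incp np; have [jA srt _ val] := incp.
split=> //; [exact: drop_sorted | | exact: drop_sorted].
apply/allP=> x /(nthP 0) [m]; rewrite size_drop ltn_subRL nth_drop => mp <-.
have /andP[_ ->] := inc_sub_nth_bounds incp mp; rewrite andbT.
have [->|m0] := posnP m; first by rewrite addn0.
by rewrite ltnW // (inc_sub_pos_lt incp) // -[X in X < _]addn0 ltn_add2l.
Qed.

Lemma inc_sub_splice i i' j p q m n :
  inc_sub A i j p -> inc_sub A i' j q -> m < size p -> n < size q ->
  nth 0 p m < nth 0 q n -> (nth 0 A (nth 0 p m) < nth 0 A (nth 0 q n))%R ->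
  inc_sub A i j (take m.+1 p ++ drop n q).
Proof.
move=> incp incq mp nq pos val.
have [jA psrt pin pval] := inc_sub_take m.+1 incp.
have [_ qsrt qin qval] := inc_sub_drop incq nq.
have /andP[ip _] := inc_sub_nth_bounds incp mp.
move: psrt pin pval qsrt qin qval; rewrite (take_nth 0 mp) (drop_nth 0 nq).
move=> psrt pin pval qsrt qin qval; split=> //.
- by rewrite cat_rcons sorted_cat_cons psrt /= pos.
- rewrite all_cat pin; apply/allP=> x /(allP qin) /andP[qx ->].
  by rewrite andbT (leq_trans ip) // (leq_trans (ltnW pos) qx).
- by rewrite cat_rcons sorted_cat_cons pval /= val.
Qed.

Lemma size_splice p q m n : m < size p -> n <= size q ->
  size (take m.+1 p ++ drop n q) = m.+1 + (size q - n).
Proof. by move=> mp nq; rewrite size_cat size_take size_drop; case: ltnP; lia. Qed.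

Lemma suffix_start_bound k1 c b i p :
  suffix_start A k1 c b -> inc_sub A i c p -> k1 <= size p -> 0 < k1 ->
  nth 0 p (size p - k1) <= b.
Proof.
move=> [_ _ maxb] incp k1p k1pos; rewrite leqNgt; apply/negP=> gtb.
have np : size p - k1 < size p by lia.
have /andP[_ lec] := inc_sub_nth_bounds incp np.
apply: (maxb (nth 0 p (size p - k1))); first by rewrite gtb lec.
exists (drop (size p - k1) p); split; first exact: inc_sub_drop incp np.
by rewrite size_drop; lia.
Qed.

End IncreasingSubsequences.

Lemma lex_le_nth p q s : lex_le p q -> take s p = take s q ->
  s < size p -> s < size q -> nth 0 p s <= nth 0 q s.
Proof.
case=> [-> | [u [up uq eqpre lt]]] eqs sp sq //.
case: (ltngtP u s) => [us | su | <-]; last exact: ltnW.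
- have : nth 0 (take s p) u = nth 0 (take s q) u by rewrite eqs.
  by rewrite !nth_take // => E; rewrite E ltnn in lt.
- have : nth 0 (take u p) s = nth 0 (take u q) s by rewrite eqpre.
  by rewrite !nth_take // => ->.
Qed.

Section Lemma3.
Variables (R : realDomainType) (A : seq R) (k1 k2 a b c : nat) (X Y : seq nat).
Hypotheses (uniqA : uniq A) (k1pos : 0 < k1) (k12 : k1 < k2).
Hypothesis suffix_b : suffix_start A k1 c b.
Hypothesis lexminX : lexmin_inc_sub A a c k2 X.
Hypotheses (incY : inc_sub A b c Y) (sizeY : size Y = k1).

Let incX : inc_sub A a c X. Proof. by case: lexminX. Qed.
Let sizeX : size X = k2. Proof. by case: lexminX. Qed.

Let val_neq u v : u <= c -> v <= c -> u != v -> nth 0%R A u != nth 0%R A v.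
Proof.
have [cA _ _ _] := incY; move=> uc vc.
by rewrite nth_uniq // (leq_ltn_trans _ cA).
Qed.

(* t = 0: x_D <= b <= y_0. *)
Lemma lemma3_base : nth 0 X (k2 - k1) <= nth 0 Y 0.
Proof.
have := suffix_start_bound suffix_b incX _ k1pos.
rewrite sizeX => /(_ (ltnW k12)) xb.
have /andP[bY _] : b <= nth 0 Y 0 <= c by apply: inc_sub_nth_bounds incY _; rewrite sizeY.
exact: leq_trans xb bY.
Qed.

Lemma lemma3_step t : t.+1 < k1 ->
  nth 0 X (t + (k2 - k1)) <= nth 0 Y t -> nth 0 X (t.+1 + (k2 - k1)) <= nth 0 Y t.+1.
Proof.
rewrite addSn; set s := t + (k2 - k1) => tk IH.
have sX : s.+1 < size X by rewrite sizeX /s; lia.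
have tY : t.+1 < size Y by rewrite sizeY.
have yty : nth 0 Y t < nth 0 Y t.+1 := inc_sub_pos_lt incY (ltnSn t) tY.
rewrite leqNgt; apply/negP=> ltYX.
have /andP[_ Yc] := inc_sub_nth_bounds incY tY.
have /andP[_ Xc] := inc_sub_nth_bounds incX sX.
have := val_neq Yc Xc (negbT (ltn_eqF ltYX)).
case: ltgtP => // [valYX | valXY] _.
- (* y_0..y_{t+1} x_{s+1}.. is an increasing subsequence of (a_b..a_c) of length k1+1 *)
  have incV := inc_sub_splice incY incX tY sX ltYX valYX.
  have sizeV : size (take t.+2 Y ++ drop s.+1 X) = k1.+1.
    by rewrite size_splice ?sizeX ?sizeY /s; lia.
  have := suffix_start_bound suffix_b incV _ k1pos.
  rewrite sizeV subSnn nth_cat size_takel // nth_take // => /(_ (leqnSn k1)) Y1b.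
  have /andP[bY0 _] : b <= nth 0 Y 0 <= c.
    by apply: inc_sub_nth_bounds incY _; rewrite sizeY; lia.
  have := inc_sub_pos_lt incY (ltnSn 0) (leq_ltn_trans (ltn0Sn t) tY).
  by rewrite ltnNge (leq_trans Y1b bY0).
- (* x_0..x_s y_{t+1}.. is an increasing subsequence of (a_a..a_c) beating X *)
  have XY : nth 0 X s < nth 0 Y t.+1 := leq_ltn_trans IH yty.
  have valX : (nth 0 A (nth 0 X s) < nth 0 A (nth 0 X s.+1))%R.
    exact: inc_sub_val_lt incX (ltnSn s) sX.
  have incZ := inc_sub_splice incX incY (ltnW sX) tY XY (lt_trans valX valXY).
  have sizeZ : size (take s.+1 X ++ drop t.+1 Y) = k2.
    by rewrite size_splice ?sizeX ?sizeY /s; lia.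
  have [_ _ minX] := lexminX.
  have sizepre : size (take s.+1 X) = s.+1 by rewrite size_takel // ltnW.
  have prefZ : take s.+1 X = take s.+1 (take s.+1 X ++ drop t.+1 Y).
    by rewrite take_size_cat.
  have := lex_le_nth (minX _ incZ sizeZ) prefZ sX; rewrite sizeZ -sizeX => /(_ sX).
  by rewrite nth_cat sizepre ltnn subnn nth_drop addn0 leqNgt ltYX.
Qed.
End Lemma3.

Theorem lemma3 (R : realDomainType) (A : seq R) (k1 k2 : nat)
  (a b c : nat) (X Y : seq nat) :
  uniq A -> (0 < k1)%N -> (k1 < k2)%N ->
  cover_start A k1 k2 a ->
  prefix_end A k2 a c ->
  suffix_start A k1 c b ->
  lexmin_inc_sub A a c k2 X ->
  lexmin_inc_sub A b c k1 Y ->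
  forall t, (t < k1)%N -> (nth 0 X (t + (k2 - k1)) <= nth 0 Y t)%N.
Proof.
move=> uniqA k1pos k12 _ _ suffix_b lexminX [incY sizeY _].
elim=> [|t IH] tk.
  by rewrite add0n; apply: lemma3_base k1pos k12 suffix_b lexminX incY sizeY.
exact: lemma3_step uniqA k1pos k12 suffix_b lexminX incY sizeY t tk (IH (ltnW tk)).
Qed.
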